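(* For every $(2,2)$-form $\alpha$ in $\mathbb C^4$ there exists a basis $\omega_1,\dots,\omega_4$ of $(\mathbb C^4)^\ast$ such that $$\alpha\wedge\omega_1\wedge\omega_2\wedge\bar\omega_1\wedge\bar\omega_j=\alpha\wedge\omega_1\wedge\omega_2\wedge\bar\omega_2\wedge\bar\omega_j=0\quad\text{for } j=3,4.$$
   Context: Forms are constant-coefficient forms on $\mathbb C^4$, i.e. elements of the exterior algebra generated by $(\mathbb C^4)^\ast$ and its complex conjugate; a $(2,2)$-form is a linear combination of wedge products of two $(1,0)$-forms and two $(0,1)$-forms. *)

From HB Require Import structures.
From mathcomp Require Import all_boot all_order all_algebra.
From mathcomp Require Import complex.
From mathcomp Require Import reals.
Set Implicit Arguments. Unset Strict Implicit. Unset Printing Implicit Defensive.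
Import Order.TTheory GRing.Theory Num.Theory.
Local Open Scope ring_scope.

(* Constant-coefficient forms on C^4: the exterior algebra on the 8 generators
   dz_1..dz_4 (indices lshift 4 i) and dzbar_1..dzbar_4 (indices rshift 4 i).
   A cform is given by its coefficients on the basis e_S = e_{s1}/\.../\e_{sk},
   S = {s1 < ... < sk} a subset of 'I_8. *)
Definition cform (C : Type) := {ffun {set 'I_(4 + 4)} -> C}.

(* sign of e_A /\ e_B = (-1)^(inversions) e_(A u B) for disjoint A, B *)
Definition wsign (A B : {set 'I_(4 + 4)}) : bool :=
  odd #|[set p : 'I_(4 + 4) * 'I_(4 + 4) | [&& p.1 \in A, p.2 \in B & (p.2 < p.1)%N]]|.

Definition wedge (C : comNzRingType) (f g : cform C) : cform C :=
  [ffun S => \sum_(A : {set 'I_(4 + 4)})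
               \sum_(B : {set 'I_(4 + 4)} | [disjoint A & B] && (A :|: B == S))
                 (-1) ^+ wsign A B * f A * g B].

Definition holo1 (C : comNzRingType) (c : 'rV[C]_4) : cform C :=
  [ffun S => \sum_(i < 4) (if S == [set lshift 4 i] then c 0 i else 0)].

Definition antiholo1 (C : comNzRingType) (d : 'rV[C]_4) : cform C :=
  [ffun S => \sum_(i < 4) (if S == [set rshift 4 i] then d 0 i else 0)].

Definition conjform1 (R : rcfType) (c : 'rV[(complex R)]_4) : cform (complex R) :=
  antiholo1 (map_mx (@conjc R) c).

Definition is_22form (C : comNzRingType) (f : cform C) : Prop :=
  forall S, f S != 0 ->
    #|[set i : 'I_4 | lshift 4 i \in S]| = 2%N /\
    #|[set i : 'I_4 | rshift 4 i \in S]| = 2%N.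

Definition zero_form (C : comNzRingType) : cform C := [ffun => 0].

(* Write h(u,v,w,z) for the coefficient of the top-degree form
   alpha /\ u /\ v /\ conj w /\ conj z of a (2,2)-form alpha and (1,0)-forms
   u, v, w, z.  It is linear in v, conjugate-linear in z, and alternating in
   (u,v) and in (w,z).  Suppose h(u,v,u,v) <> 0 for some u, v whose coefficients
   on dz1, dz2 form a unitriangular matrix, so that u, v, dz3, dz4 is a basis.
   Replacing dz_j (j = 3, 4) by dz_j + x u + y v, the conditions
   h(u,v,u,.) = h(u,v,v,.) = 0 become a linear system in conj x, conj y with
   determinant h(u,v,u,v), hence solvable.  Otherwise h(u,v,u,v) = 0 for all
   such pairs; then t |-> h(dz1, dz2 + t dz_j, dz1, dz2 + t dz_j) vanishes
   identically and its conj t-coefficient is h(dz1,dz2,dz1,dz_j), while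
   t |-> h(dz1 + t dz_j, dz2, dz1 + t dz_j, dz2) gives h(dz1,dz2,dz2,dz_j) = 0,
   so the standard basis works. *)

From HB Require Import structures.
From mathcomp Require Import all_boot all_order all_algebra.
From mathcomp Require Import complex reals boolp ring sesquilinear.
Import GRing.Theory Num.Theory.
Local Open Scope ring_scope.
Set Implicit Arguments.
Unset Strict Implicit.
Unset Printing Implicit Defensive.

Lemma card_split_ord m n (S : {set 'I_(m + n)}) :
  #|S| = (#|[set i | lshift n i \in S]| + #|[set j | rshift m j \in S]|)%N.
Proof.
by rewrite -!sum1_card big_split_ord; congr (_ + _)%N; apply: eq_bigl => i; rewrite inE.
Qed.

Lemma card_setU1_sep (T : finType) (A : {set T}) a (P : pred T) : a \notin A ->
  #|[set x in a |: A | P x]| = (P a + #|[set x in A | P x]|)%N.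
Proof.
move=> aA; have [Pa|nPa] := boolP (P a).
  have -> : [set x in a |: A | P x] = a |: [set x in A | P x].
    by apply/setP => x; rewrite !inE; case: eqP => [->|]; rewrite ?Pa.
  by rewrite cardsU1 !inE (negbTE aA).
rewrite add0n.
by apply: eq_card => x; rewrite !inE; case: eqP => [->|]; rewrite ?(negbTE nPa) ?andbF.
Qed.

Lemma wsign1 (A : {set 'I_(4 + 4)}) b :
  wsign A [set b] = odd #|[set x in A | (b < x)%N]|.
Proof.
have pair_b_inj : injective (fun x : 'I_(4 + 4) => (x, b)) by move=> x y [].
rewrite /wsign -(card_imset _ pair_b_inj).
congr odd; apply: eq_card => -[x y]; rewrite !inE /=.
apply/idP/imsetP => [/and3P[xA /eqP-> bx]|[z]]; first by exists x; rewrite // !inE xA.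
by rewrite !inE => /andP[zA bz] [-> ->]; rewrite zA eqxx bz.
Qed.

(* C itself is not canonically an lmodType over C; its regular module C^o is. *)
HB.instance Definition _ (C : comNzRingType) :=
  GRing.Lmodule.copy (cform C) {ffun {set 'I_(4 + 4)} -> C^o}.

Section Wedge.
Context {C : comNzRingType}.
Implicit Types (f g X : cform C) (S : {set 'I_(4 + 4)}).

Lemma cformDE f g S : (f + g) S = f S + g S.
Proof. by rewrite ffunE. Qed.

Lemma cformZE (k : C) f S : (k *: f) S = k * f S.
Proof. by rewrite ffunE. Qed.

Lemma wedge_is_bilinear : bilinear_for
  (GRing.Scale.Law.clone _ _ *:%R _) (GRing.Scale.Law.clone _ _ *:%R _) (@wedge C).
Proof.
split=> [g|f] a x y; apply/ffunP => S;
  rewrite cformDE cformZE !ffunE mulr_sumr -big_split; apply: eq_bigr => A _;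
  rewrite mulr_sumr -big_split; apply: eq_bigr => B _; rewrite cformDE cformZE /=.
  by rewrite mulrDr mulrDl mulrCA -[a * _ * _]mulrA.
by rewrite mulrDr mulrCA.
Qed.

HB.instance Definition _ := bilinear_isBilinear.Build C
  (cform C) (cform C) (cform C) _ _ (@wedge C) wedge_is_bilinear.

Definition homogeneous (k : nat) f := forall S, f S != 0 -> #|S| = k.

Lemma homogeneous_wedge k l f g :
  homogeneous k f -> homogeneous l g -> homogeneous (k + l) (wedge f g).
Proof.
move=> hf hg S; apply: contraNeq => hS; rewrite ffunE big1 // => A _.
rewrite big1 // => B /andP[dAB /eqP defS].
have [fA0|/hf fA] := eqVneq (f A) 0; first by rewrite fA0 mulr0 mul0r.
have [gB0|/hg gB] := eqVneq (g B) 0; first by rewrite gB0 mulr0.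
by move: hS; rewrite -defS cardsU (disjoint_setI0 dAB) cards0 subn0 fA gB eqxx.
Qed.

Lemma homogeneous_top f : homogeneous (4 + 4) f -> forall S, S != setT -> f S = 0.
Proof.
move=> hf S; apply: contraNeq => /hf cardS.
by rewrite eqEcard subsetT cardsT card_ord cardS.
Qed.

Lemma homogeneous_22 f : is_22form f -> homogeneous 4 f.
Proof. by move=> hf S /hf[hl hr]; rewrite card_split_ord hl hr. Qed.

Lemma homogeneous_sum_set1 (I : finType) (p : I -> 'I_(4 + 4)) (c : I -> C) :
  homogeneous 1 [ffun S => \sum_i (if S == [set p i] then c i else 0)].
Proof.
move=> S; apply: contraNeq => hS; rewrite ffunE big1 // => i _.
by case: eqP => // defS; move: hS; rewrite defS cards1.
Qed.

Lemma homogeneous_holo1 (c : 'rV[C]_4) : homogeneous 1 (holo1 c).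
Proof. exact: homogeneous_sum_set1. Qed.

Lemma homogeneous_antiholo1 (d : 'rV[C]_4) : homogeneous 1 (antiholo1 d).
Proof. exact: homogeneous_sum_set1. Qed.

Definition dx (a : 'I_(4 + 4)) : cform C := [ffun S => (S == [set a])%:R].

Lemma homogeneous1E f : homogeneous 1 f -> f = \sum_a f [set a] *: dx a.
Proof.
move=> hf; apply/ffunP => S; rewrite sum_ffunE.
under eq_bigr do rewrite cformZE ffunE.
have [[a ->]|nS] := altP (@cards1P _ S).
  rewrite (bigD1 a) //= eqxx mulr1 big1 ?addr0 // => b /negbTE ba.
  by rewrite (inj_eq set1_inj) eq_sym ba mulr0.
rewrite big1; first by apply/eqP; apply: contraNT nS => /hf ->.
by move=> a _; case: eqP => [defS|]; [move: nS; rewrite defS cards1 | rewrite mulr0].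
Qed.

Lemma wedge_dx f a : wedge f (dx a) =
  [ffun S : {set _} => if a \in S then (-1) ^+ wsign (S :\ a) [set a] * f (S :\ a) else 0].
Proof.
apply/ffunP => S; rewrite !ffunE.
rewrite (eq_bigr (fun A : {set _} => if [disjoint A & [set a]] && (A :|: [set a] == S)
    then (-1) ^+ wsign A [set a] * f A else 0)); last first.
  move=> A _; rewrite big_mkcond (bigD1 [set a]) //= big1 ?addr0.
    by rewrite ffunE eqxx mulr1.
  by move=> B /negbTE hB; rewrite ffunE hB mulr0; case: ifP.
rewrite (bigD1 (S :\ a)) //= big1 ?addr0.
  rewrite disjoint_sym disjoints1 !inE eqxx /=.
  have [aS|aS] := boolP (a \in S); first by rewrite setUC setD1K // eqxx.
  by case: eqP => // defS; move: aS; rewrite -defS !inE eqxx orbT.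
move=> A hA; rewrite disjoint_sym disjoints1.
case: (boolP (a \in A)) => //= aA; case: eqP => // defS.
by move: hA; rewrite -defS setUC setU1K // eqxx.
Qed.

Lemma wedge_dxC X a b :
  wedge (wedge X (dx a)) (dx b) = - wedge (wedge X (dx b)) (dx a).
Proof.
rewrite !wedge_dx; apply/ffunP => S; rewrite !ffunE !inE.
have [<-|ab] := eqVneq a b; first by case: ifP => _; rewrite ?mulr0 ?oppr0.
case: (boolP (b \in S)) => bS; case: (boolP (a \in S)) => aS /=; rewrite ?mulr0 ?oppr0 //.
set T := S :\ a :\ b.
have TC : S :\ b :\ a = T by apply/setP => x; rewrite !inE andbCA.
have aT : a \notin T by rewrite !inE eqxx andbF.
have bT : b \notin T by rewrite !inE eqxx.
rewrite TC; have -> : S :\ b = a |: T by rewrite -TC setD1K // !inE ab.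
have -> : S :\ a = b |: T by rewrite setD1K // !inE eq_sym ab.
rewrite !wsign1 !signr_odd !card_setU1_sep // !exprD.
case: (ltngtP a b) => [_|_|/val_inj abE]; last by rewrite abE eqxx in ab.
  by rewrite /= expr0 expr1 mul1r mulN1r mulNr opprK mulrCA.
by rewrite /= expr0 expr1 mul1r mulN1r mulNr mulrCA.
Qed.

Lemma wedge1C X f g : homogeneous 1 f -> homogeneous 1 g ->
  wedge (wedge X f) g = - wedge (wedge X g) f.
Proof.
move=> /homogeneous1E-> /homogeneous1E->.
have expand h k : wedge (wedge X (\sum_a h [set a] *: dx a)) (\sum_b k [set b] *: dx b) =
    \sum_a \sum_b (h [set a] * k [set b]) *: wedge (wedge X (dx a)) (dx b).
  rewrite linear_sumr exchange_big; apply: eq_bigr => b _ /=.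
  rewrite linearZr_LR linear_sumr linear_sumlz /= scaler_sumr; apply: eq_bigr => a _.
  by rewrite linearZr_LR linearZl_LR /= scalerA mulrC.
rewrite !expand exchange_big -sumrN; apply: eq_bigr => a _.
rewrite -sumrN; apply: eq_bigr => b _.
by rewrite wedge_dxC scalerN mulrC.
Qed.

Lemma holo1D (c d : 'rV[C]_4) : holo1 (c + d) = holo1 c + holo1 d.
Proof.
apply/ffunP => S; rewrite cformDE !ffunE -big_split; apply: eq_bigr => i _.
by rewrite !mxE /=; case: ifP => _; rewrite ?addr0.
Qed.

Lemma holo1Z (k : C) (c : 'rV[C]_4) : holo1 (k *: c) = k *: holo1 c.
Proof.
apply/ffunP => S; rewrite cformZE !ffunE mulr_sumr; apply: eq_bigr => i _.
by rewrite !mxE; case: ifP => _; rewrite ?mulr0.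
Qed.

End Wedge.

Arguments homogeneous_holo1 {C} c.
Arguments homogeneous_antiholo1 {C} d.

Section ConjugateOneForms.
Context {R : rcfType}.
Implicit Types (c d : 'rV[R[i]]_4).

Lemma conjform1D c d : conjform1 (c + d) = conjform1 c + conjform1 d.
Proof.
apply/ffunP => S; rewrite cformDE !ffunE -big_split; apply: eq_bigr => i _.
by rewrite !mxE rmorphD /=; case: ifP => _; rewrite ?addr0.
Qed.

Lemma conjform1Z (k : R[i]) c : conjform1 (k *: c) = k^* *: conjform1 c.
Proof.
apply/ffunP => S; rewrite cformZE !ffunE mulr_sumr; apply: eq_bigr => i _.
by rewrite !mxE rmorphM; case: ifP => _; rewrite ?mulr0.
Qed.

End ConjugateOneForms.

Lemma unitmx_unitrig (C : comUnitRingType) n (A : 'M[C]_n) :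
  is_trig_mx A -> (forall i, A i i = 1) -> A \in unitmx.
Proof. by move=> trA A1; rewrite unitmxE det_trig // big1 ?unitr1. Qed.

Section Frame.
Context {C : comUnitRingType}.
Implicit Types (u v : 'rV[C]_4) (x y : 'I_4 -> C).

Definition frame u v x y : 'M[C]_4 := \matrix_i
  (if i == 0 :> nat then u else if i == 1 :> nat then v else 'e_i + x i *: u + y i *: v).

Lemma row_frame0 u v x y : row ord0 (frame u v x y) = u.
Proof. by rewrite rowK. Qed.

Lemma row_frame1 u v x y : row (inord 1) (frame u v x y) = v.
Proof. by rewrite rowK inordK. Qed.

Lemma row_frame u v x y (j : 'I_4) :
  (2 <= j)%N -> row j (frame u v x y) = 'e_j + x j *: u + y j *: v.
Proof. by case: j => -[|[|j]] //= ? _; rewrite rowK. Qed.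

Lemma frame_mul u v x y :
  frame u v x y = frame 'e_0 'e_1 x y *m frame u v (fun=> 0) (fun=> 0).
Proof.
apply/row_matrixP => i; rewrite row_mul !rowK.
case: ifP => i0; first by rewrite -rowE rowK.
case: ifP => i1; first by rewrite -rowE rowK.
by rewrite !mulmxDl -!scalemxAl -!rowE !rowK /= i0 i1 !scale0r !addr0.
Qed.

(* The first factor of frame_mul is lower and the second upper unitriangular. *)
Lemma frame_unit u v x y :
  u 0 0 = 1 -> v 0 0 = 0 -> v 0 1 = 1 -> frame u v x y \in unitmx.
Proof.
move=> u00 v00 v11; rewrite frame_mul unitmx_mul; apply/andP; split.
  apply: unitmx_unitrig => [|i].
    apply/is_trig_mxP => i j; rewrite mxE.
    by case: i => -[|[|[|[|//]]]] ?; case: j => -[|[|[|[|//]]]] ? //= _;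
      rewrite !mxE /=; ring.
  by rewrite mxE; case: i => -[|[|[|[|//]]]] ? /=; rewrite !mxE /=; ring.
have u0 p : u 0 (@Ordinal 4 0 p) = 1 by rewrite -u00; congr (u 0 _); apply: val_inj.
have v0 p : v 0 (@Ordinal 4 0 p) = 0 by rewrite -v00; congr (v 0 _); apply: val_inj.
have v1 p : v 0 (@Ordinal 4 1 p) = 1 by rewrite -v11; congr (v 0 _); apply: val_inj.
rewrite unitmxE -det_tr -unitmxE; apply: unitmx_unitrig => [|i].
  apply/is_trig_mxP => i j; rewrite !mxE.
  by case: i => -[|[|[|[|//]]]] ?; case: j => -[|[|[|[|//]]]] ? //= _;
    rewrite ?mxE /= ?v0; ring.
by rewrite !mxE; case: i => -[|[|[|[|//]]]] ? /=; rewrite ?mxE /= ?u0 ?v1; ring.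
Qed.

End Frame.

(* Evaluate at t = 1, -1 and 'i. *)
Lemma conj_coef_eq0 (C : numClosedFieldType) (P A B Q : C) :
  (forall t, P + t^* * A + t * B + t * (t^* * Q) = 0) -> A = 0.
Proof.
move=> h; move: (h 1) (h (-1)) (h 'i); rewrite conjC1 conjCN1 conjCi => h1 hN hi.
have /eqP : 4%:R * 'i * A = 'i * ((P + 1 * A + 1 * B + 1 * (1 * Q))
        - (P + -1 * A + -1 * B + -1 * (-1 * Q)))
    + (P + 1 * A + 1 * B + 1 * (1 * Q)) + (P + -1 * A + -1 * B + -1 * (-1 * Q))
    - 2%:R * (P + - 'i * A + 'i * B + 'i * (- 'i * Q)) - 2%:R * (1 + 'i * 'i) * Q by ring.
rewrite h1 hN hi mulCii !subrr !(mulr0, mul0r, addr0, subr0).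
by rewrite !mulf_eq0 pnatr_eq0 (negbTE (@neq0Ci C)) => /eqP.
Qed.

Section TopCoefficient.
Variables (R : rcfType) (alpha : cform R[i]).
Implicit Types (u v w z : 'rV[R[i]]_4).

Definition Hform u v w z : cform R[i] :=
  wedge (wedge (wedge (wedge alpha (holo1 u)) (holo1 v)) (conjform1 w)) (conjform1 z).

Definition hcoef u v w z : R[i] := Hform u v w z setT.

Lemma Hform_eq0 u v w z : is_22form alpha -> hcoef u v w z = 0 -> Hform u v w z = 0.
Proof.
move=> ha h0; apply/ffunP => S; rewrite [RHS]ffunE.
have hom : homogeneous (4 + 1 + 1 + 1 + 1) (Hform u v w z) :=
  homogeneous_wedge (homogeneous_wedge (homogeneous_wedge (homogeneous_wedge
    (homogeneous_22 ha) (homogeneous_holo1 u)) (homogeneous_holo1 v))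
    (homogeneous_antiholo1 _)) (homogeneous_antiholo1 _).
by have [->//|] := eqVneq S setT; apply: homogeneous_top; exact: hom.
Qed.

Lemma hcoefN12 u v w z : hcoef u v w z = - hcoef v u w z.
Proof.
rewrite /hcoef /Hform (wedge1C _ (homogeneous_holo1 u) (homogeneous_holo1 v)).
by rewrite !linearNl ffunE.
Qed.

Lemma hcoefN34 u v w z : hcoef u v w z = - hcoef u v z w.
Proof.
by rewrite /hcoef /Hform (wedge1C _ (homogeneous_antiholo1 _) (homogeneous_antiholo1 _)) ffunE.
Qed.

Lemma hcoef_swap u v w z : hcoef u v w z = hcoef v u z w.
Proof. by rewrite hcoefN12 hcoefN34 opprK. Qed.

Lemma hcoef_diag u v w : hcoef u v w w = 0.
Proof.
have /eqP := hcoefN34 u v w w.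
by rewrite -addr_eq0 -mulr2n mulrn_eq0 => /eqP.
Qed.

Lemma hcoefD2 u v1 v2 w z : hcoef u (v1 + v2) w z = hcoef u v1 w z + hcoef u v2 w z.
Proof. by rewrite /hcoef /Hform holo1D linearDr !linearDl ffunE. Qed.

Lemma hcoefZ2 k u v w z : hcoef u (k *: v) w z = k * hcoef u v w z.
Proof. by rewrite /hcoef /Hform holo1Z linearZr_LR !linearZl_LR ffunE. Qed.

Lemma hcoefD4 u v w z1 z2 : hcoef u v w (z1 + z2) = hcoef u v w z1 + hcoef u v w z2.
Proof. by rewrite /hcoef /Hform conjform1D linearDr ffunE. Qed.

Lemma hcoefZ4 k u v w z : hcoef u v w (k *: z) = k^* * hcoef u v w z.
Proof. by rewrite /hcoef /Hform conjform1Z linearZr_LR ffunE. Qed.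

Lemma hcoef_polar p q r :
  (forall t, hcoef p (q + t *: r) p (q + t *: r) = 0) -> hcoef p q p r = 0.
Proof.
move=> h0; apply: (@conj_coef_eq0 _ (hcoef p q p q) _ (hcoef p r p q) (hcoef p r p r)) => t.
by rewrite -(h0 t) hcoefD2 !hcoefD4 !hcoefZ2 !hcoefZ4 addrA.
Qed.

Definition orth_frame u v : 'M[R[i]]_4 :=
  frame u v (fun j => (hcoef u v v 'e_j / hcoef u v u v)^*)
            (fun j => (- hcoef u v u 'e_j / hcoef u v u v)^*).

Lemma orth_frameP u v (j : 'I_4) : hcoef u v u v != 0 -> (2 <= j)%N ->
  hcoef u v u (row j (orth_frame u v)) = 0 /\ hcoef u v v (row j (orth_frame u v)) = 0.
Proof.
move=> nz j2; rewrite row_frame //; split;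
  rewrite !hcoefD4 !hcoefZ4 !conjCK hcoef_diag mulr0.
  by rewrite addr0 divfK // subrr.
by rewrite [hcoef u v v u]hcoefN34 mulrN divfK // subrr add0r.
Qed.

Lemma std_frameP :
    (forall u v, u 0 0 = 1 -> v 0 0 = 0 -> v 0 1 = 1 -> hcoef u v u v = 0) ->
  forall j : 'I_4, (2 <= j)%N ->
  hcoef 'e_0 'e_1 'e_0 'e_j = 0 /\ hcoef 'e_0 'e_1 'e_1 'e_j = 0.
Proof.
move=> degenerate j j2.
have [j0 j1] : (0 == j) = false /\ (1 == j) = false by case: j j2 => -[|[|]].
split.
  apply: hcoef_polar => t.
  by apply: degenerate; rewrite !mxE /= ?j0 ?j1 ?mulr0 ?addr0.
rewrite hcoefN12 (hcoef_polar (q := 'e_0)) ?oppr0 // => t.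
by rewrite hcoef_swap; apply: degenerate; rewrite !mxE /= ?j0 ?j1 ?mulr0 ?addr0.
Qed.

End TopCoefficient.

Theorem lemma6 (R : realType) (alpha : cform (complex R)) :
  is_22form alpha ->
  exists M : 'M[(complex R)]_4,
    M \in unitmx /\
    forall j : 'I_4, (2 <= j)%N ->
      wedge (wedge (wedge (wedge alpha (holo1 (row ord0 M))) (holo1 (row (inord 1) M)))
                   (conjform1 (row ord0 M))) (conjform1 (row j M)) = zero_form (complex R) /\
      wedge (wedge (wedge (wedge alpha (holo1 (row ord0 M))) (holo1 (row (inord 1) M)))
                   (conjform1 (row (inord 1) M))) (conjform1 (row j M)) = zero_form (complex R).
Proof.
move=> ha.
have [[u [v [u00 v00 v11 nz]]] | nondegenerate] := pselect
  (exists u v : 'rV[R[i]]_4, [/\ u 0 0 = 1, v 0 0 = 0, v 0 1 = 1 & hcoef alpha u v u v != 0]).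
  exists (orth_frame alpha u v); split; first exact: frame_unit.
  move=> j j2; rewrite row_frame0 row_frame1.
  by have [] := orth_frameP nz j2; split; apply: Hform_eq0.
have degenerate (u v : 'rV[R[i]]_4) :
    u 0 0 = 1 -> v 0 0 = 0 -> v 0 1 = 1 -> hcoef alpha u v u v = 0.
  by move=> *; apply/eqP/negbNE/negP => nz; apply: nondegenerate; exists u, v.
exists (frame 'e_0 'e_1 (fun=> 0) (fun=> 0)); split; first by apply: frame_unit; rewrite mxE.
move=> j j2; rewrite row_frame0 row_frame1 row_frame // !scale0r !addr0.
by have [] := std_frameP degenerate j2; split; apply: Hform_eq0.
Qed.
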